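(* Let $T$ be a DAT with duration vector $d$, let $v$ be a module of $T$, and let $T^v$, $\tilde v$, $d^v$ be as defined below. Then for every successful attack $\mathcal{O}$ on $T$ there exists a successful attack $\mathcal{O}'$ on $T^v$ with $\mathrm{t}(\mathcal{O}',d^v)\le\mathrm{t}(\mathcal{O},d)$.
   Context: A dynamic attack tree (DAT) is a finite rooted directed acyclic graph $T=(N,E)$ (edges point from a node to its children) with root $\mathrm{R}_T$, in which each node $v$ has a type $\gamma(v)\in\{\mathtt{BAS},\mathtt{OR},\mathtt{AND},\mathtt{SAND}\}$, with $\gamma(v)=\mathtt{BAS}$ if and only if $v$ is a leaf. Every node of type $\mathtt{SAND}$ comes with a fixed linear ordering $v_1,\dots,v_n$ of its children, written $v=\mathtt{SAND}(v_1,\dots,v_n)$; similarly one writes $v=\mathtt{OR}(v_1,\dots,v_n)$, $v=\mathtt{AND}(v_1,\dots,v_n)$. $N_\gamma$ denotes the set of nodes of type $\gamma$. For a node $v$, $T_v$ is the sub-DAG induced on the descendants of $v$ (all nodes reachable from $v$ by a directed path, including $v$), rooted at $v$, with the inherited types and orderings, and $B_v$ is the set of nodes of $T_v$ of type $\mathtt{BAS}$. A module of $T$ is a node $v\in N\setminus N_{\mathtt{BAS}}$ such that every directed path from a node outside $T_v$ to a node of $T_v$ passes through $v$; equivalently, every node of $T_v$ other than $v$ has all its parents inside $T_v$. An attack on $T$ is a pair $\mathcal{O}=(A,\prec)$ where $A\subseteq N_{\mathtt{BAS}}$ and $\prec$ is a strict partial order on $A$. An attack $(A,\prec)$ reaches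 a node $v$, defined recursively: if $v\in N_{\mathtt{BAS}}$, iff $v\in A$; if $v=\mathtt{OR}(v_1,\dots,v_n)$, iff it reaches some $v_i$; if $v=\mathtt{AND}(v_1,\dots,v_n)$, iff it reaches all $v_i$; if $v=\mathtt{SAND}(v_1,\dots,v_n)$, iff it reaches all $v_i$ and for every $i<n$, every $a\in A\cap B_{v_i}$ and every $a'\in A\cap B_{v_{i+1}}$ one has $a\prec a'$. An attack is successful if it reaches the root. A duration vector is $d\in\mathbb{R}_{\ge0}^{N_{\mathtt{BAS}}}$. For an attack $\mathcal{O}=(A,\prec)$, $\mathrm{t}(\mathcal{O},d)=\max_C\sum_{a\in C}d_a$, the maximum over all maximal chains $C$ of $(A,\prec)$ (equal to $0$ if $A=\varnothing$). The min time $\mathrm{mt}(T,d)$ is the minimum of $\mathrm{t}(\mathcal{O},d)$ over successful attacks $\mathcal{O}$ on $T$ ($\infty$ if there are none). For a module $v$: $T^v$ is the DAT obtained from $T$ by deleting all nodes of $T_v$ other than $v$ (with their incident edges) and turning $v$ into a new leaf $\tilde v$ of type $\mathtt{BAS}$ (keeping its incoming edges and its position in the child orderings of its $\mathtt{SAND}$-parents); $d^v$ is the duration vector on the BASes of $T^v$ given by $d^v_a=d_a$ for $a\in N_{\mathtt{BAS}}\setminus B_v$ and $d^v_{\tilde v}=\mathrm{mt}(T_v,d|_{B_v})$ (if this is $\infty$, then $\mathrm{t}(\mathcal{O},d^v)=\infty$ for any attack $\mathcal{O}$ containing $\tilde v$). *)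

From HB Require Import structures.
From mathcomp Require Import all_boot all_order all_algebra.
From mathcomp Require Import boolp constructive_ereal reals.

Set Implicit Arguments.
Unset Strict Implicit.
Unset Printing Implicit Defensive.
Import Order.TTheory GRing.Theory Num.Theory.

Inductive gate := BAS | OR | AND | SAND.

Definition is_bas (g : gate) : bool := if g is BAS then true else false.

(** A DAT over a finite node type N: a type for each node, the ordered list
    of children of each node (edges point from a node to its children; the
    order of the list is the linear ordering used by SAND nodes), and a root. *)
Record dat (N : finType) := DAT {
  ty : N -> gate;
  ch : N -> seq N;
  root : N }.

Section DAT.
Variable N : finType.
Implicit Types T : dat N.

Definition edge T : rel N := fun u w => w \in ch T u.

Definition desc T (v x : N) : bool := connect (edge T) v x.

Definition wf_dat T : Prop :=
  [/\ (forall u w, w \in ch T u -> ~~ desc T w u),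
      (forall u, uniq (ch T u)),
      (forall x, desc T (root T) x)
    & (forall u, ty T u = BAS <-> ch T u = [::])].

Definition Bset T (v : N) : {set N} := [set x | desc T v x & is_bas (ty T x)].

Definition is_module T (v : N) : Prop :=
  ty T v <> BAS /\
  forall x u, desc T v x -> x != v -> x \in ch T u -> desc T v u.

(** An attack (A, prec), prec given as a set of pairs (a, a') meaning a < a'. *)
Definition attack_t := ({set N} * {set N * N})%type.

Definition is_attack T (O : attack_t) : Prop :=
  [/\ (forall a, a \in O.1 -> ty T a = BAS),
      (forall a b, (a, b) \in O.2 -> (a \in O.1) && (b \in O.1)),
      (forall a, (a, a) \notin O.2)
    & (forall a b c, (a, b) \in O.2 -> (b, c) \in O.2 -> (a, c) \in O.2)].

(** The attack O reaches node v (least fixed point of the recursive rules,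
    which on a finite DAG coincides with the recursive definition). *)
Inductive reaches T (O : attack_t) : N -> Prop :=
| reaches_BAS v : ty T v = BAS -> v \in O.1 -> reaches T O v
| reaches_OR v w : ty T v = OR -> w \in ch T v -> reaches T O w ->
    reaches T O v
| reaches_AND v : ty T v = AND -> (forall w, w \in ch T v -> reaches T O w) ->
    reaches T O v
| reaches_SAND v : ty T v = SAND ->
    (forall w, w \in ch T v -> reaches T O w) ->
    (forall i, i.+1 < size (ch T v) -> forall a a',
        a \in O.1 -> a' \in O.1 ->
        a \in Bset T (nth v (ch T v) i) ->
        a' \in Bset T (nth v (ch T v) i.+1) ->
        (a, a') \in O.2) ->
    reaches T O v.

Definition successful T (O : attack_t) : Prop :=
  is_attack T O /\ reaches T O (root T).

Definition is_chain (O : attack_t) (C : {set N}) : bool :=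
  (C \subset O.1) &&
  [forall a in C, forall b in C,
     (a != b) ==> (((a, b) \in O.2) || ((b, a) \in O.2))].

Definition is_maxchain (O : attack_t) (C : {set N}) : bool :=
  is_chain O C &&
  [forall C' : {set N}, (is_chain O C' && (C \subset C')) ==> (C' == C)].

Local Open Scope ereal_scope.

(** t(O, d): maximum over maximal chains of the total duration (the empty
    set is the unique maximal chain when A is empty, giving 0). *)
Definition time {R : realDomainType} (O : attack_t) (d : N -> \bar R) : \bar R :=
  \big[maxe/-oo]_(C : {set N} | is_maxchain O C) \sum_(a in C) d a.

Definition mintime {R : realDomainType} T (d : N -> \bar R) : \bar R :=
  \big[mine/+oo]_(O : attack_t | `[< successful T O >]) time O d.

End DAT.

Section Constructions.
Variables (N : finType) (T : dat N) (v : N).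

Definition sub_node := {x : N | desc T v x}.

Definition sub_root : sub_node := exist _ v (connect0 (edge T) v).

Definition subdat : dat sub_node :=
  DAT (fun x : sub_node => ty T (val x))
      (fun x : sub_node => pmap insub (ch T (val x)))
      sub_root.

(** T^v: delete all nodes of T_v other than v; v becomes the leaf ~v of type
    BAS, keeping its incoming edges and its position in child orderings. *)
Definition quot_node := {x : N | (x == v) || ~~ desc T v x}.

Lemma vtilde_mem : (v == v) || ~~ desc T v v.
Proof. by rewrite eqxx. Qed.

Definition vtilde : quot_node := exist _ v vtilde_mem.

Definition quotdat : dat quot_node :=
  DAT (fun x : quot_node => if val x == v then BAS else ty T (val x))
      (fun x : quot_node => if val x == v then [::]
                            else pmap insub (ch T (val x)))
      (insubd vtilde (root T)).

Definition dquot {R : realDomainType} (d : N -> R) : quot_node -> \bar R :=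
  fun x => if val x == v then mintime subdat (fun y : sub_node => (d (val y))%:E)
           else (d (val x))%:E.

End Constructions.

Arguments dquot [N] T v {R} d _.

(* Collapse O onto T^v: the events of O inside T_v become the single event
   vtilde, ordered before (after) an outside event exactly when all of them
   are, and present iff O reaches v. Since v is a module, the SAND constraints
   of T^v only compare vtilde with outside events, so the collapsed attack is
   successful. For the duration, a maximal chain of the collapsed attack
   through vtilde costs mt(T_v) plus the rest; mt(T_v) is at most the time of
   the restriction of O to T_v, and any chain of that restriction together
   with the rest of the chain is a chain of O. *)

From Pilot Require Import Defs.
From HB Require Import structures.
From mathcomp Require Import all_boot all_order all_algebra.
From mathcomp Require Import boolp constructive_ereal reals.
Set Implicit Arguments.
Unset Strict Implicit.
Unset Printing Implicit Defensive.
Import Order.TTheory GRing.Theory Num.Theory.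

Lemma connect_homo (A B : finType) (f : A -> B) (e : rel A) (e' : rel B) :
  {homo f : x y / e x y >-> e' x y} ->
  {homo f : x y / connect e x y >-> connect e' x y}.
Proof.
move=> fe x y /connectP [p + ->]; elim: p x => [|z p IH] x /=.
  by rewrite connect0.
by case/andP=> /fe exz /IH; apply: connect_trans (connect1 exz).
Qed.

Section PmapInsub.
Variables (T : eqType) (P : pred T) (sT : subType P) (s : seq T).
Hypothesis sP : all P s.

Lemma map_val_pmap_insub : map val (pmap (insub : T -> option sT) s) = s.
Proof. by elim: s sP => //= x s' IH /andP[Px /IH]; rewrite insubT /= SubK => ->. Qed.

Lemma size_pmap_insub : size (pmap (insub : T -> option sT) s) = size s.
Proof. by rewrite -(size_map val) map_val_pmap_insub. Qed.

Lemma nth_pmap_insub (y0 : sT) (x0 : T) i : i < size s ->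
  val (nth y0 (pmap insub s) i) = nth x0 s i.
Proof.
by move=> lt_is; rewrite -(nth_map y0 x0) ?map_val_pmap_insub ?size_pmap_insub.
Qed.

End PmapInsub.

Section Chains.
Variables (N : finType) (O : attack_t N).

Definition comparable_in (a b : N) := ((a, b) \in O.2) || ((b, a) \in O.2).

Lemma is_chainP (C : {set N}) :
  reflect (C \subset O.1 /\ {in C &, forall a b, a != b -> comparable_in a b})
          (is_chain O C).
Proof.
apply: (iffP andP) => -[sub cmp]; split=> //.
  by move=> a b aC bC; move/forall_inP/(_ a aC)/forall_inP/(_ b bC)/implyP: cmp.
by apply/forall_inP=> a aC; apply/forall_inP=> b bC; apply/implyP; apply: cmp.
Qed.

Lemma is_chainU (A B : {set N}) : is_chain O A -> is_chain O B ->
  {in A & B, forall a b, comparable_in a b} -> is_chain O (A :|: B).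
Proof.
move=> /is_chainP[sA cA] /is_chainP[sB cB] cAB; apply/is_chainP; split.
  by rewrite subUset sA.
move=> a b /setUP[aA|aB] /setUP[bA|bB] ab; first exact: cA.
- exact: cAB.
- by rewrite /comparable_in orbC; apply: cAB.
- exact: cB.
Qed.

Lemma is_chainS (A B : {set N}) : A \subset B -> is_chain O B -> is_chain O A.
Proof.
move=> sAB /is_chainP[sB cB]; apply/is_chainP; split; first exact: subset_trans sB.
by move=> a b /(subsetP sAB) aB /(subsetP sAB); apply: cB.
Qed.

Lemma is_chain_imset (M : finType) (O' : attack_t M) (f : N -> M) (C : {set N}) :
  {in C &, injective f} -> {in C, forall a, f a \in O'.1} ->
  {in C &, forall a b, (a, b) \in O.2 -> (f a, f b) \in O'.2} ->
  is_chain O C -> is_chain O' (f @: C).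
Proof.
move=> finj fA fP /is_chainP[_ cC]; apply/andP; split.
  by apply/subsetP=> _ /imsetP[a aC ->]; apply: fA.
apply/forall_inP=> _ /imsetP[a aC ->]; apply/forall_inP=> _ /imsetP[b bC ->].
apply/implyP=> fab; have ab : a != b by apply: contraNneq fab => ->.
by case/orP: (cC a b aC bC ab) => [/fP->|/fP->] //; rewrite ?orbT.
Qed.

Lemma maxchain_exists (C0 : {set N}) :
  is_chain O C0 -> exists2 C, is_maxchain O C & C0 \subset C.
Proof.
move=> hC0; have P0 : is_chain O C0 && (C0 \subset C0) by rewrite hC0 subxx.
case: (@arg_maxnP _ C0 (fun C => is_chain O C && (C0 \subset C)) (fun C : {set N} => #|C|) P0) => C /andP[hC sub] Cmax.
exists C => //; rewrite /is_maxchain hC; apply/forall_inP=> C' /andP[hC' sCC'].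
rewrite eq_sym eqEcard sCC' /=; apply: Cmax; by rewrite hC' (subset_trans sub sCC').
Qed.

Lemma chain_sum_le_time (R : realDomainType) (d : N -> R) (C0 : {set N}) :
  {in O.1, forall a, (0 <= d a)%R} -> is_chain O C0 ->
  ((\sum_(a in C0) d a)%:E <= time O (fun a => (d a)%:E))%E.
Proof.
move=> d_ge0 /maxchain_exists[C hC sub]; apply: le_trans (le_bigmax_cond _ _ hC).
rewrite sumEFin lee_fin [leRHS](big_setID C0) /= (setIidPr sub) lerDl.
apply: sumr_ge0 => a /setDP[aC _]; apply: d_ge0.
by case/andP: hC => /is_chainP[/subsetP sC _] _; apply: sC.
Qed.

End Chains.

Section Reaches.
Variables (N : finType) (T : dat N) (O : attack_t N).

Lemma desc_step u x : desc T u x -> u != x -> exists2 w, w \in ch T u & desc T w x.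
Proof.
case/connectP => [[|w p]] /=; first by move=> _ ->; rewrite eqxx.
by case/andP=> euw pth -> _; exists w => //; apply/connectP; exists p.
Qed.

Lemma desc_child u w x : w \in ch T u -> desc T w x -> desc T u x.
Proof. by move=> wu; apply: connect_trans (connect1 (wu : edge T u w)). Qed.

Lemma reaches_desc_attack : wf_dat T ->
  forall x, reaches T O x -> exists2 y, y \in O.1 & desc T x y.
Proof.
case=> _ _ _ leafE; have child u : ty T u <> BAS -> exists w, w \in ch T u.
  by case e: (ch T u) => [|w s]; [move/leafE: e | exists w; rewrite mem_head].
have via_child u w : w \in ch T u -> (exists2 y, y \in O.1 & desc T w y) ->
    exists2 y, y \in O.1 & desc T u y.
  by move=> wu [y yA wy]; exists y => //; apply: desc_child wy.
move=> x; elim=> {}x.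
- by move=> _ xA; exists x => //; apply: connect0.
- by move=> w _ wx _; apply: via_child.
- by move=> tx _ IH; have [|w wx] := child x; [rewrite tx | apply: via_child (IH w wx)].
- by move=> tx _ IH _; have [|w wx] := child x; [rewrite tx | apply: via_child (IH w wx)].
Qed.

Lemma attack_Bset c z : is_attack T O -> desc T c z -> z \in O.1 -> z \in Bset T c.
Proof. by case=> attBAS _ _ _ cz zA; rewrite inE cz attBAS. Qed.

End Reaches.

Section Collapse.
Variables (N : finType) (T : dat N) (v : N).
Hypothesis wfT : wf_dat T.
Hypothesis modv : is_module T v.
Variable O : attack_t N.
Hypothesis attO : is_attack T O.

Local Notation vt := (vtilde T v).
Local Notation Tq := (quotdat T v).
Local Notation Tv := (subdat T v).

Lemma val_quot_eqv (a : quot_node T v) : (val a == v) = (a == vt).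
Proof. by apply/eqP/eqP => [av|-> //]; apply: val_inj. Qed.

Lemma quot_desc (a b : quot_node T v) : desc Tq a b -> desc T (val a) (val b).
Proof. by apply: connect_homo => x y; rewrite /edge /=; case: ifP; rewrite ?mem_pmap_sub. Qed.

Lemma sub_desc (a b : sub_node T v) : desc Tv a b -> desc T (val a) (val b).
Proof. by apply: connect_homo => x y; rewrite /edge /= mem_pmap_sub. Qed.

Lemma quot_child x w : ~~ desc T v x -> w \in ch T x -> (w == v) || ~~ desc T v w.
Proof.
move=> nvx wx; have [//|wv] := eqVneq w v; apply/negP => vw.
by case: modv => _ /(_ w x vw wv wx); apply/negP.
Qed.

Lemma val_quot_root : val (insubd vt (Defs.root T)) = Defs.root T.
Proof.
rewrite insubdK // unfold_in /=; have [//|rv] := eqVneq (Defs.root T) v.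
apply/negP => vr; case: wfT => acyc _ rooted _.
have [w wv /connect_trans/(_ vr) wr] := desc_step (rooted v) rv.
by have := acyc _ _ wv; rewrite /desc wr.
Qed.

Definition inner_bas : {set N} := [set y in O.1 | desc T v y].

Definition reaches_v : bool := `[< reaches T O v >].

Definition quot_attack : attack_t (quot_node T v) :=
  ([set x | if val x == v then reaches_v else val x \in O.1],
   [set p | if val p.1 == v then
              [&& val p.2 != v, reaches_v, val p.2 \in O.1
                & [forall y in inner_bas, (y, val p.2) \in O.2]]
            else if val p.2 == v then
              [&& reaches_v, val p.1 \in O.1
                & [forall y in inner_bas, (val p.1, y) \in O.2]]
            else (val p.1, val p.2) \in O.2]).

Lemma inner_bas_nonempty : reaches_v -> exists y, y \in inner_bas.
Proof.
by move/asboolP/(reaches_desc_attack wfT) => [y yA vy]; exists y; rewrite inE yA vy.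
Qed.

Lemma quot_attack_is_attack : is_attack Tq quot_attack.
Proof.
case: attO => attBAS attP irr trans; split.
- by move=> a; rewrite inE /=; case: ifP => // _; apply: attBAS.
- move=> a b; rewrite !inE.
  case: eqVneq => av; case: eqVneq => bv //=.
  + by case/and3P => -> ->.
  + by case/and3P => -> -> _.
  + exact: attP.
- by move=> a; rewrite inE; case: eqVneq => //= _; apply: irr.
- move=> a b c; rewrite !inE.
  case: eqVneq => av; case: eqVneq => bv; case: eqVneq => cv //=.
  + case/and3P => rv _ /forall_inP yb /and3P[_ _ /forall_inP by_].
    have [y yv] := inner_bas_nonempty rv.
    by have := trans _ _ _ (yb _ yv) (by_ _ yv); rewrite (negbTE (irr y)).
  + case/and3P => -> bA /forall_inP yb bc; case/andP: (attP _ _ bc) => _ -> /=.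
    by apply/forall_inP => y yv; apply: trans (yb _ yv) bc.
  + case/and3P => rv _ /forall_inP ay /and3P[_ _ /forall_inP yc].
    by have [y yv] := inner_bas_nonempty rv; apply: trans (ay _ yv) (yc _ yv).
  + move=> ab /and3P[-> _ /forall_inP by_]; case/andP: (attP _ _ ab) => -> _ /=.
    by apply/forall_inP => y yv; apply: trans ab (by_ _ yv).
  + exact: trans.
Qed.

Lemma quot_attack_precE (a b : quot_node T v) : val a != v -> val b != v ->
  ((a, b) \in quot_attack.2) = ((val a, val b) \in O.2).
Proof. by move=> av bv; rewrite inE /= (negbTE av) (negbTE bv). Qed.

Lemma quot_attack_prec_of_desc c c' (a a' : quot_node T v) :
  (forall z z', z \in O.1 -> z' \in O.1 -> desc T c z -> desc T c' z' ->
     (z, z') \in O.2) ->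
  a \in quot_attack.1 -> a' \in quot_attack.1 ->
  desc T c (val a) -> desc T c' (val a') -> (a, a') \in quot_attack.2.
Proof.
move=> cc'; rewrite !inE.
case: eqVneq => [->|av]; case: eqVneq => [->|a'v] //= aA a'A ca c'a'.
- have [z] := inner_bas_nonempty aA; rewrite inE => /andP[zA vz].
  have := cc' z z zA zA (connect_trans ca vz) (connect_trans c'a' vz).
  by case: attO => _ _ /(_ z)/negbTE->.
- rewrite aA a'A; apply/forall_inP => z; rewrite inE => /andP[zA vz].
  exact: cc' (connect_trans ca vz) c'a'.
- rewrite a'A aA; apply/forall_inP => z; rewrite inE => /andP[zA vz].
  exact: cc' ca (connect_trans c'a' vz).
- exact: cc'.
Qed.

Lemma reaches_quot_vtilde (y : quot_node T v) : val y = v -> reaches T O v ->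
  reaches Tq quot_attack y.
Proof.
move=> yv rv; apply: reaches_BAS; first by rewrite /= yv eqxx.
by rewrite inE yv eqxx; apply/asboolP.
Qed.

Lemma quot_node_outside (y : quot_node T v) : val y != v ->
  [/\ ~~ desc T v (val y), ty Tq y = ty T (val y)
    & ch Tq y = pmap insub (ch T (val y))].
Proof. by move=> yv; rewrite /= (negbTE yv); move: (valP y); rewrite (negbTE yv). Qed.

Lemma reaches_quot x : reaches T O x ->
  forall y : quot_node T v, val y = x -> reaches Tq quot_attack y.
Proof.
move=> rx; move: (rx); elim: rx => {}x.
- move=> tx xA rx y yx; apply: reaches_BAS; first by rewrite /= yx; case: ifP.
  by rewrite inE yx; case: eqVneq => [xv|//]; apply/asboolP; rewrite -xv.
- move=> w tx wx rw IH rx y yx; have [xv|yv] := eqVneq x v.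
    by apply: reaches_quot_vtilde; [rewrite yx | rewrite -xv].
  rewrite -yx in tx wx yv; have [nvy tyE chE] := quot_node_outside yv.
  apply: (reaches_OR (w := Sub w (quot_child nvy wx))).
  + by rewrite tyE.
  + by rewrite chE mem_pmap_sub.
  + by apply: IH rw _ _; rewrite SubK.
- move=> tx rch IH rx y yx; have [xv|yv] := eqVneq x v.
    by apply: reaches_quot_vtilde; [rewrite yx | rewrite -xv].
  rewrite -yx in tx rch IH yv; have [nvy tyE chE] := quot_node_outside yv.
  apply: reaches_AND; first by rewrite tyE.
  by move=> w; rewrite chE mem_pmap_sub => wy; apply: IH wy (rch _ wy) w erefl.
- move=> tx rch IH sandx rx y yx; have [xv|yv] := eqVneq x v.
    by apply: reaches_quot_vtilde; [rewrite yx | rewrite -xv].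
  rewrite -yx in tx rch IH sandx yv; have [nvy tyE chE] := quot_node_outside yv.
  apply: reaches_SAND; first by rewrite tyE.
    by move=> w; rewrite chE mem_pmap_sub => wy; apply: IH wy (rch _ wy) w erefl.
  have chq : all (fun w => (w == v) || ~~ desc T v w) (ch T (val y)).
    by apply/allP => w; apply: quot_child nvy.
  rewrite chE size_pmap_insub // => i ltiy a a' aA a'A.
  move=> aB a'B; rewrite !inE in aB a'B.
  case/andP: aB => /quot_desc ca _; case/andP: a'B => /quot_desc c'a' _.
  rewrite !(nth_pmap_insub _ _ (val y)) // 1?ltnW // in ca c'a'.
  apply: quot_attack_prec_of_desc ca c'a' => //.
  move=> z z' zA z'A cz c'z'.
  exact: sandx ltiy _ _ zA z'A (attack_Bset attO cz zA) (attack_Bset attO c'z' z'A).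
Qed.

Lemma successful_quot : reaches T O (Defs.root T) -> successful Tq quot_attack.
Proof.
by move=> rr; split; [apply: quot_attack_is_attack | apply: reaches_quot rr _ val_quot_root].
Qed.

Definition sub_attack : attack_t (sub_node T v) :=
  ([set x | val x \in O.1], [set p | (val p.1, val p.2) \in O.2]).

Lemma sub_attack_is_attack : is_attack Tv sub_attack.
Proof.
case: attO => attBAS attP irr trans; split=> [a|a b|a|a b c]; rewrite /= ?inE.
- exact: attBAS.
- exact: attP.
- exact: irr.
- exact: trans.
Qed.

Lemma reaches_sub x : reaches T O x ->
  forall y : sub_node T v, val y = x -> reaches Tv sub_attack y.
Proof.
have chv (y : sub_node T v) w : w \in ch T (val y) -> desc T v w.
  by move=> wy; apply: connect_trans (valP y) (connect1 (wy : edge T _ w)).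
elim=> {}x.
- by move=> tx xA y yx; apply: reaches_BAS; rewrite /= ?inE yx.
- move=> w tx wx _ IH y yx; rewrite -yx in tx wx.
  apply: (reaches_OR (w := Sub w (chv _ _ wx))) => //.
    by rewrite /= mem_pmap_sub.
  by apply: IH; rewrite SubK.
- move=> tx _ IH y yx; apply: reaches_AND; first by rewrite /= yx.
  by move=> w; rewrite /= mem_pmap_sub yx => wx; apply: IH wx w erefl.
- move=> tx _ IH sandx y yx; rewrite -yx in tx IH sandx.
  apply: reaches_SAND => //.
    by move=> w; rewrite /= mem_pmap_sub => wy; apply: IH wy w erefl.
  have chs : all (desc T v) (ch T (val y)) by apply/allP => w; apply: chv.
  rewrite /= size_pmap_insub // => i ltiy a a' aA a'A aB a'B.
  rewrite !inE in aA a'A aB a'B *.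
  case/andP: aB => /sub_desc ca _; case/andP: a'B => /sub_desc c'a' _.
  rewrite !(nth_pmap_insub _ _ (val y)) // 1?ltnW // in ca c'a'.
  exact: sandx ltiy _ _ aA a'A (attack_Bset attO ca aA) (attack_Bset attO c'a' a'A).
Qed.

Lemma successful_sub : reaches T O v -> successful Tv sub_attack.
Proof. by move=> rv; split; [apply: sub_attack_is_attack | apply: reaches_sub rv _ _]. Qed.

Lemma quot_chain_val (C : {set quot_node T v}) :
  is_chain quot_attack C -> is_chain O (val @: (C :\ vt)).
Proof.
move=> /(is_chainS (subsetDl C [set vt])) chC.
have /is_chainP[/subsetP sC _] := chC.
apply: is_chain_imset chC; first by move=> a b _ _; apply: val_inj.
  move=> a /[dup] aC /setD1P[avt _]; move: (sC a aC).
  by rewrite inE val_quot_eqv (negbTE avt).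
by move=> a b /setD1P[avt _] /setD1P[bvt _]; rewrite quot_attack_precE // val_quot_eqv.
Qed.

Lemma sub_chain_val (C : {set sub_node T v}) :
  is_chain sub_attack C -> is_chain O (val @: C).
Proof.
move=> chC; have /is_chainP[/subsetP sC _] := chC.
apply: is_chain_imset chC; first by move=> a b _ _; apply: val_inj.
  by move=> a /sC; rewrite inE.
by move=> a b _ _; rewrite inE.
Qed.

Lemma sub_chain_val_inner (C : {set sub_node T v}) :
  is_chain sub_attack C -> val @: C \subset inner_bas.
Proof.
case/is_chainP=> /subsetP sC _; apply/subsetP => _ /imsetP[a /sC aA ->].
by move: aA; rewrite !inE => ->; apply: valP.
Qed.

Lemma quot_chain_comparable_inner (C : {set quot_node T v}) :
  is_chain quot_attack C -> vt \in C ->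
  {in inner_bas & val @: (C :\ vt), forall a b, comparable_in O a b}.
Proof.
case/is_chainP=> _ cC vtC a _ aI /imsetP[b /setD1P[bvt bC] ->].
move/negbTE: (bvt); rewrite -val_quot_eqv => bv.
have := cC vt b vtC bC; rewrite eq_sym bvt => /(_ isT).
rewrite /comparable_in !inE /= eqxx bv /=.
by case/orP=> /and3P[_ _ /forall_inP H]; rewrite H ?orbT.
Qed.

Lemma disjoint_sub_quot_vals (Cs : {set sub_node T v}) (C : {set quot_node T v}) :
  [disjoint val @: Cs & val @: (C :\ vt)].
Proof.
apply/pred0P => x /=; apply/negP => /andP[/imsetP[a _ ->] /imsetP[b /setD1P[bvt _] ab]].
by have := valP b; rewrite val_quot_eqv (negbTE bvt) /= -ab (valP a).
Qed.

Lemma time_quot_attack_le (R : realDomainType) (d : N -> R) :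
  (forall a, ty T a = BAS -> (0 <= d a)%R) ->
  (time quot_attack (dquot T v d) <= time O (fun a => (d a)%:E))%E.
Proof.
move=> d_ge0; have dA : {in O.1, forall a, (0 <= d a)%R}.
  by case: attO => attBAS _ _ _ a /attBAS/d_ge0.
apply: bigmax_le => [|C /andP[chC _]]; first exact: leNye.
have sum_rest : (\sum_(a in C :\ vt) dquot T v d a
                  = (\sum_(x in val @: (C :\ vt)) d x)%:E)%E.
  rewrite big_imset /=; last by move=> x y _ _; apply: val_inj.
  rewrite -sumEFin; apply: eq_bigr => a /setD1P[avt _].
  by rewrite /dquot val_quot_eqv (negbTE avt).
have [vtC|vtC] := boolP (vt \in C); last first.
  have -> : C = C :\ vt by apply/setP => a; rewrite !inE; case: eqVneq => // ->; apply/negbTE.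
  by rewrite sum_rest; apply: chain_sum_le_time dA (quot_chain_val chC).
have rv : reaches T O v.
  by case/is_chainP: chC => /subsetP/(_ vt vtC); rewrite inE eqxx => /asboolP.
rewrite (big_setD1 _ vtC) sum_rest /dquot /= eqxx.
apply: le_trans (leeD2r _ (bigmin_le_cond _ _ (asboolT (successful_sub rv)))) _.
rewrite -leeBrDr //; apply: bigmax_le => [|Cs /andP[chCs _]]; first exact: leNye.
rewrite leeBrDr // sumEFin -EFinD -big_imset /=; last by move=> x y _ _; apply: val_inj.
rewrite -bigU ?disjoint_sub_quot_vals // (eq_bigl [in val @: Cs :|: val @: (C :\ vt)]).
  apply: chain_sum_le_time dA _.
  apply: is_chainU (sub_chain_val chCs) (quot_chain_val chC) _.
  by move=> a b /(subsetP (sub_chain_val_inner chCs)); apply: quot_chain_comparable_inner.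
by move=> x; rewrite !inE.
Qed.

End Collapse.

Theorem mainTheorem11 (R : realType) (N : finType) (T : dat N) (d : N -> R)
    (v : N) :
  wf_dat T ->
  (forall a, ty T a = BAS -> (0 <= d a)%R) ->
  is_module T v ->
  forall O : attack_t N, successful T O ->
  exists O' : attack_t (quot_node T v),
    successful (quotdat T v) O' /\
    (time O' (dquot T v d) <= time O (fun a => (d a)%:E))%E.
Proof.
move=> wfT d_ge0 modv O [attO rO]; exists (quot_attack T v O); split.
  exact: successful_quot.
exact: time_quot_attack_le.
Qed.
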